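(* Let $f:[1/\sqrt2,1)\to\mathbb{R}$, $f(q)=(4q^4-5q^2+1)\mathrm{K}(q)+(-8q^4+8q^2-1)\mathrm{E}(q)$. Then there exists a unique $\hat q\in(1/\sqrt2,q_* )$ such that $f(\hat q)=0$. In addition, $f>0$ on $[1/\sqrt2,\hat q)$ and $f<0$ on $(\hat q,1)$.
   Context: For $q\in[0,1)$, $\mathrm{K}(q)=\int_0^{\pi/2}(1-q^2\sin^2\theta)^{-1/2}\,d\theta$ and $\mathrm{E}(q)=\int_0^{\pi/2}(1-q^2\sin^2\theta)^{1/2}\,d\theta$ are the complete elliptic integrals of the first and second kind. The function $q\mapsto2\mathrm{E}(q)-\mathrm{K}(q)$ is strictly decreasing on $[0,1)$ and $q_*\in(0,1)$ denotes its unique zero. *)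

From Stdlib Require Import Reals.
From Coquelicot Require Import Coquelicot.
Open Scope R_scope.

Definition ellK (q : R) : R :=
  RInt (fun t => / sqrt (1 - q ^ 2 * (sin t) ^ 2)) 0 (PI / 2).
Definition ellE (q : R) : R :=
  RInt (fun t => sqrt (1 - q ^ 2 * (sin t) ^ 2)) 0 (PI / 2).

Definition f_lem (q : R) : R :=
  (4 * q ^ 4 - 5 * q ^ 2 + 1) * ellK q + (- 8 * q ^ 4 + 8 * q ^ 2 - 1) * ellE q.

(* Put x = q^2.  Then f = N(x) E - D(x) K with D(x) = (4x - 1)(1 - x) > 0 and
   N(x) = -8x^2 + 8x - 1; on [1/2, 1) the ratio N/D is strictly decreasing, E is
   nonincreasing and K is nondecreasing.  Hence once f(q1) <= 0 for some
   q1 >= 1/sqrt 2, f stays negative on (q1, 1): f changes sign at most once.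
   At q = 1/sqrt 2, f = E - K/2 > 0, because the integrand (2u - 1)/sqrt u of
   2E - K (with u = 1 - q^2 sin^2 t) is positive when q^2 <= 1/2; the same fact
   forces q_* > 1/sqrt 2.  At q_*, where K = 2E, f = (1 - 2 q_*^2) E < 0.  The
   integrands of K and E are locally Lipschitz in q uniformly in t, so K and E
   are continuous on (-1, 1) and the intermediate value theorem gives the root. *)

From Stdlib Require Import Reals Lra Psatz Ranalysis5.
From Coquelicot Require Import Coquelicot.
Open Scope R_scope.

Definition lipschitz_on_ge (phi : R -> R) (c L : R) : Prop :=
  forall u v, c <= u -> c <= v -> Rabs (phi u - phi v) <= L * Rabs (u - v).

Lemma sqrt_lipschitz c : 0 < c -> lipschitz_on_ge sqrt c (/ sqrt c).
Proof.
  intros Hc u v Hu Hv.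
  pose proof (sqrt_lt_R0 c Hc) as Hsc.
  pose proof (sqrt_le_1_alt c u Hu) as Hsu.
  pose proof (sqrt_le_1_alt c v Hv) as Hsv.
  assert (Hdiff : u - v = (sqrt u - sqrt v) * (sqrt u + sqrt v)).
  { rewrite <- (sqrt_sqrt u), <- (sqrt_sqrt v) at 1 by lra. ring. }
  rewrite Hdiff, Rabs_mult, (Rabs_right (sqrt u + sqrt v)) by lra.
  apply Rmult_le_reg_l with (sqrt c); [lra|].
  rewrite <- Rmult_assoc, Rinv_r by lra.
  pose proof (Rabs_pos (sqrt u - sqrt v)). nra.
Qed.

Lemma Rinv_lipschitz c : 0 < c -> lipschitz_on_ge Rinv c (/ c ^ 2).
Proof.
  intros Hc u v Hu Hv.
  assert (Hdiff : / u - / v = (v - u) * / (u * v)) by (field; lra).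
  assert (Huv : c ^ 2 <= u * v) by nra.
  rewrite Hdiff, Rabs_mult, Rabs_minus_sym, Rmult_comm.
  rewrite (Rabs_right (/ (u * v))) by (apply Rle_ge, Rlt_le, Rinv_0_lt_compat; nra).
  apply Rmult_le_compat_r; [apply Rabs_pos|].
  apply Rinv_le_contravar; nra.
Qed.

Lemma lipschitz_on_ge_comp phi psi c d L M : 0 <= L ->
  (forall u, c <= u -> d <= psi u) ->
  lipschitz_on_ge phi d L -> lipschitz_on_ge psi c M ->
  lipschitz_on_ge (fun u => phi (psi u)) c (L * M).
Proof.
  intros HL Hpsi Hphi Hpsi_lip u v Hu Hv.
  eapply Rle_trans; [apply Hphi; auto|].
  rewrite Rmult_assoc. apply Rmult_le_compat_l; auto.
Qed.

Lemma RInt_Rminus (f g : R -> R) a b : ex_RInt f a b -> ex_RInt g a b ->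
  RInt (fun t => f t - g t) a b = RInt f a b - RInt g a b.
Proof. exact (RInt_minus (V := R_CompleteNormedModule) f g a b). Qed.

Lemma continuity_pt_RInt_lipschitz (g : R -> R -> R) a b q0 r L :
  a <= b -> 0 < r ->
  (forall q, Rabs (q - q0) < r -> ex_RInt (g q) a b) ->
  (forall q t, Rabs (q - q0) < r -> a <= t <= b ->
     Rabs (g q t - g q0 t) <= L * Rabs (q - q0)) ->
  continuity_pt (fun q => RInt (g q) a b) q0.
Proof.
  intros Hab Hr Hex Hlip eps Heps.
  set (M := (b - a) * Rabs L + 1).
  assert (HM : 1 <= M) by (pose proof (Rabs_pos L); unfold M; nra).
  exists (Rmin r (eps / M)); split.
  { apply Rmin_pos; [lra | apply Rdiv_lt_0_compat; lra]. }
  intros q [_ Hq]; simpl in *; unfold R_dist in *.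
  pose proof (Rmin_l r (eps / M)). pose proof (Rmin_r r (eps / M)).
  assert (Hq0 : Rabs (q0 - q0) < r) by (rewrite Rminus_diag_eq, Rabs_R0 by reflexivity; lra).
  assert (Hbound : Rabs (RInt (g q) a b - RInt (g q0) a b)
                   <= (b - a) * (L * Rabs (q - q0))).
  { rewrite <- RInt_Rminus by (apply Hex; lra).
    apply abs_RInt_le_const; auto.
    - apply (ex_RInt_minus (V := R_NormedModule)); apply Hex; lra.
    - intros t Ht. apply Hlip; auto; lra. }
  assert (Hsmall : M * Rabs (q - q0) < eps).
  { apply Rmult_lt_reg_l with (/ M); [apply Rinv_0_lt_compat; lra|].
    rewrite <- Rmult_assoc, Rinv_l, Rmult_1_l by lra.
    unfold Rdiv in *. lra. }
  assert (HL : (b - a) * (L * Rabs (q - q0)) <= (b - a) * Rabs L * Rabs (q - q0)).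
  { rewrite <- Rmult_assoc, !(Rmult_comm _ (Rabs (q - q0))).
    apply Rmult_le_compat_l; [apply Rabs_pos|].
    apply Rmult_le_compat_l; [lra | apply Rle_abs]. }
  pose proof (Rabs_pos (q - q0)). unfold M in Hsmall. lra.
Qed.

Definition ell_radicand (q t : R) : R := 1 - q ^ 2 * sin t ^ 2.

Lemma sin_sqr_bound t : 0 <= sin t ^ 2 <= 1.
Proof. pose proof (sin2_cos2 t). unfold Rsqr in *. nra. Qed.

Lemma ell_radicand_lower_bound q t : 1 - q ^ 2 <= ell_radicand q t.
Proof. pose proof (sin_sqr_bound t). unfold ell_radicand. nra. Qed.

Lemma ell_radicand_pos q t : q ^ 2 < 1 -> 0 < ell_radicand q t.
Proof. pose proof (ell_radicand_lower_bound q t). lra. Qed.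

Lemma ell_radicand_antitone q1 q2 t : q1 ^ 2 <= q2 ^ 2 ->
  ell_radicand q2 t <= ell_radicand q1 t.
Proof. pose proof (sin_sqr_bound t). unfold ell_radicand. nra. Qed.

Lemma ell_radicand_diff q1 q2 t :
  Rabs (ell_radicand q1 t - ell_radicand q2 t) <= Rabs (q1 ^ 2 - q2 ^ 2).
Proof.
  pose proof (sin_sqr_bound t).
  replace (ell_radicand q1 t - ell_radicand q2 t) with ((q2 ^ 2 - q1 ^ 2) * sin t ^ 2)
    by (unfold ell_radicand; ring).
  rewrite Rabs_mult, Rabs_minus_sym, (Rabs_right (sin t ^ 2)) by lra.
  pose proof (Rabs_pos (q1 ^ 2 - q2 ^ 2)). nra.
Qed.

Lemma continuous_ell_radicand q t : continuous (ell_radicand q) t.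
Proof.
  apply (ex_derive_continuous (V := R_NormedModule)).
  unfold ell_radicand. auto_derive. exact I.
Qed.

Section EllipticIntegral.

Variable phi : R -> R.
Hypothesis continuous_phi : forall u, 0 < u -> continuous phi u.

Let ell_integral (q : R) : R := RInt (fun t => phi (ell_radicand q t)) 0 (PI / 2).

Lemma continuous_ell_integrand q t : q ^ 2 < 1 ->
  continuous (fun t => phi (ell_radicand q t)) t.
Proof.
  intros Hq. apply continuous_comp; [apply continuous_ell_radicand|].
  apply continuous_phi, ell_radicand_pos, Hq.
Qed.

Lemma ex_RInt_ell_integrand q a b : q ^ 2 < 1 ->
  ex_RInt (fun t => phi (ell_radicand q t)) a b.
Proof.
  intros Hq. apply (ex_RInt_continuous (V := R_CompleteNormedModule)).
  intros t _. apply continuous_ell_integrand, Hq.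
Qed.

Lemma ell_integral_pos q : q ^ 2 < 1 -> (forall u, 0 < u -> 0 < phi u) ->
  0 < ell_integral q.
Proof.
  intros Hq Hphi. apply RInt_gt_0; [exact PI2_RGT_0| |].
  - intros t _. apply Hphi, ell_radicand_pos, Hq.
  - intros t _. apply continuous_ell_integrand, Hq.
Qed.

Lemma continuity_pt_ell_integral q0 : Rabs q0 < 1 ->
  (forall c, 0 < c -> exists L, lipschitz_on_ge phi c L) ->
  continuity_pt ell_integral q0.
Proof.
  intros Hq0 Hlip.
  pose proof (Rabs_pos q0).
  set (rho := (1 + Rabs q0) / 2).
  destruct (Hlip (1 - rho ^ 2)) as [L HL]; [unfold rho; nra|].
  assert (Hrho : Rabs q0 <= rho < 1) by (unfold rho; lra).
  assert (Hnear : forall q, Rabs (q - q0) < (1 - Rabs q0) / 2 -> Rabs q <= rho).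
  { intros q Hq. pose proof (Rabs_triang (q - q0) q0).
    replace (q - q0 + q0) with q in * by ring. unfold rho. lra. }
  assert (Hsqr : forall q, Rabs q <= rho -> q ^ 2 <= rho ^ 2).
  { intros q Hq. rewrite <- pow2_abs. pose proof (Rabs_pos q). nra. }
  apply continuity_pt_RInt_lipschitz with ((1 - Rabs q0) / 2) (Rabs L * 2).
  - pose proof PI2_RGT_0. lra.
  - lra.
  - intros q Hq. apply ex_RInt_ell_integrand.
    pose proof (Hsqr q (Hnear q Hq)). nra.
  - intros q t Hq _.
    pose proof (Hnear q Hq) as Hq_rho.
    assert (Hbelow : forall p, Rabs p <= rho -> 1 - rho ^ 2 <= ell_radicand p t).
    { intros p Hp. pose proof (ell_radicand_lower_bound p t). pose proof (Hsqr p Hp). lra. }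
    assert (Hsq : Rabs (q ^ 2 - q0 ^ 2) <= 2 * Rabs (q - q0)).
    { replace (q ^ 2 - q0 ^ 2) with ((q + q0) * (q - q0)) by ring.
      rewrite Rabs_mult. apply Rmult_le_compat_r; [apply Rabs_pos|].
      pose proof (Rabs_triang q q0). lra. }
    eapply Rle_trans; [apply HL; apply Hbelow; lra|].
    rewrite Rmult_assoc. eapply Rle_trans; [apply Rmult_le_compat_r; [apply Rabs_pos | apply Rle_abs]|].
    apply Rmult_le_compat_l; [apply Rabs_pos|].
    eapply Rle_trans; [apply ell_radicand_diff | exact Hsq].
Qed.

End EllipticIntegral.

Lemma continuous_inv_sqrt u : 0 < u -> continuous (fun u => / sqrt u) u.
Proof.
  intros Hu. apply continuous_Rinv_comp; [apply continuous_sqrt|].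
  apply Rgt_not_eq, sqrt_lt_R0, Hu.
Qed.

Lemma inv_sqrt_lipschitz c : 0 < c ->
  lipschitz_on_ge (fun u => / sqrt u) c (/ sqrt c ^ 2 * / sqrt c).
Proof.
  intros Hc. pose proof (sqrt_lt_R0 c Hc).
  apply lipschitz_on_ge_comp with (sqrt c).
  - apply Rlt_le, Rinv_0_lt_compat, pow_lt; lra.
  - intros u Hu. apply sqrt_le_1_alt, Hu.
  - apply Rinv_lipschitz; lra.
  - apply sqrt_lipschitz, Hc.
Qed.

Lemma ellE_pos q : q ^ 2 < 1 -> 0 < ellE q.
Proof.
  intros Hq. exact (ell_integral_pos sqrt (fun u _ => continuous_sqrt u) q Hq sqrt_lt_R0).
Qed.

Lemma ellK_pos q : q ^ 2 < 1 -> 0 < ellK q.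
Proof.
  intros Hq. apply (ell_integral_pos (fun u => / sqrt u) continuous_inv_sqrt q Hq).
  intros u Hu. apply Rinv_0_lt_compat, sqrt_lt_R0, Hu.
Qed.

Lemma ellE_continuity_pt q : Rabs q < 1 -> continuity_pt ellE q.
Proof.
  intros Hq.
  exact (continuity_pt_ell_integral sqrt (fun u _ => continuous_sqrt u) q Hq
    (fun c Hc => ex_intro _ (/ sqrt c) (sqrt_lipschitz c Hc))).
Qed.

Lemma ellK_continuity_pt q : Rabs q < 1 -> continuity_pt ellK q.
Proof.
  intros Hq.
  exact (continuity_pt_ell_integral _ continuous_inv_sqrt q Hq
    (fun c Hc => ex_intro _ _ (inv_sqrt_lipschitz c Hc))).
Qed.

Lemma ellK_nondecreasing q1 q2 : q1 ^ 2 <= q2 ^ 2 -> q2 ^ 2 < 1 -> ellK q1 <= ellK q2.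
Proof.
  intros H12 H2.
  apply RInt_le; [exact (Rlt_le _ _ PI2_RGT_0)
    | exact (ex_RInt_ell_integrand _ continuous_inv_sqrt q1 0 (PI / 2) ltac:(lra))
    | exact (ex_RInt_ell_integrand _ continuous_inv_sqrt q2 0 (PI / 2) H2) |].
  intros t _. pose proof (ell_radicand_pos q2 t H2) as Hpos.
  pose proof (ell_radicand_antitone q1 q2 t H12) as Hle.
  apply Rinv_le_contravar; [apply sqrt_lt_R0, Hpos | apply sqrt_le_1_alt, Hle].
Qed.

Lemma ellE_nonincreasing q1 q2 : q1 ^ 2 <= q2 ^ 2 -> q2 ^ 2 < 1 -> ellE q2 <= ellE q1.
Proof.
  intros H12 H2.
  apply RInt_le; [exact (Rlt_le _ _ PI2_RGT_0)
    | exact (ex_RInt_ell_integrand _ (fun u _ => continuous_sqrt u) q2 0 (PI / 2) H2)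
    | exact (ex_RInt_ell_integrand _ (fun u _ => continuous_sqrt u) q1 0 (PI / 2) ltac:(lra)) |].
  intros t _. apply sqrt_le_1_alt, ell_radicand_antitone, H12.
Qed.

Lemma inv_sqrt_lt_twice_sqrt u : 1 / 2 < u -> / sqrt u < 2 * sqrt u.
Proof.
  intros Hu. pose proof (sqrt_lt_R0 u ltac:(lra)) as Hs.
  pose proof (sqrt_sqrt u ltac:(lra)) as Hss.
  apply Rmult_lt_reg_l with (sqrt u); [exact Hs|].
  rewrite Rinv_r by lra. nra.
Qed.

Lemma ellK_lt_twice_ellE q : q ^ 2 <= 1 / 2 -> ellK q < 2 * ellE q.
Proof.
  intros Hq.
  assert (HE : RInt (fun t => 2 * sqrt (ell_radicand q t)) 0 (PI / 2) = 2 * ellE q).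
  { exact (RInt_scal (V := R_CompleteNormedModule) _ 0 (PI / 2) 2
      (ex_RInt_ell_integrand _ (fun u _ => continuous_sqrt u) q 0 (PI / 2) ltac:(lra))). }
  rewrite <- HE. apply RInt_lt; [exact PI2_RGT_0 | | |].
  - intros t _. apply (continuous_ell_integrand (fun u => 2 * sqrt u)); [|lra].
    intros u _. apply (continuous_scal_r 2 sqrt), continuous_sqrt.
  - intros t _. exact (continuous_ell_integrand _ continuous_inv_sqrt q t ltac:(lra)).
  - intros t Ht. apply inv_sqrt_lt_twice_sqrt.
    assert (Hcos : 0 < cos t) by (apply cos_gt_0; lra).
    pose proof (sin2_cos2 t) as Hpyth. unfold Rsqr in Hpyth.
    pose proof (sin_sqr_bound t). unfold ell_radicand. nra.
Qed.

Definition coefK (x : R) : R := (4 * x - 1) * (1 - x).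
Definition coefE (x : R) : R := - 8 * x ^ 2 + 8 * x - 1.

Lemma f_lem_coef q : f_lem q = coefE (q ^ 2) * ellE q - coefK (q ^ 2) * ellK q.
Proof. unfold f_lem, coefE, coefK. ring. Qed.

Lemma coefK_pos x : 1 / 4 < x < 1 -> 0 < coefK x.
Proof. intros Hx. unfold coefK. nra. Qed.

Lemma coef_ratio_decreasing x y : 1 / 2 <= x -> x < y ->
  coefE y * coefK x < coefE x * coefK y.
Proof.
  intros Hx Hxy.
  assert (Hfactor : coefE x * coefK y - coefE y * coefK x
                    = (y - x) * (8 * ((x - 1 / 2) * (y - 1 / 2)) + 1))
    by (unfold coefE, coefK; field).
  assert (0 < (y - x) * (8 * ((x - 1 / 2) * (y - 1 / 2)) + 1)).
  { apply Rmult_lt_0_compat; [lra|]. assert (0 <= (x - 1 / 2) * (y - 1 / 2)) by nra. lra. }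
  lra.
Qed.

Lemma f_lem_neg_after_nonpos q1 q2 : 1 / 2 <= q1 ^ 2 -> 0 <= q1 < q2 -> q2 < 1 ->
  f_lem q1 <= 0 -> f_lem q2 < 0.
Proof.
  intros Hq1 H12 H2 Hf1.
  rewrite f_lem_coef in Hf1 |- *.
  assert (Hsq : q1 ^ 2 < q2 ^ 2 < 1) by nra.
  pose proof (ellK_nondecreasing q1 q2 ltac:(lra) ltac:(lra)) as HK.
  pose proof (ellE_nonincreasing q1 q2 ltac:(lra) ltac:(lra)) as HE.
  pose proof (ellK_pos q1 ltac:(lra)) as HK1.
  pose proof (ellE_pos q2 ltac:(lra)) as HE2.
  pose proof (coefK_pos (q1 ^ 2) ltac:(lra)) as HD1.
  pose proof (coefK_pos (q2 ^ 2) ltac:(lra)) as HD2.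
  pose proof (coef_ratio_decreasing (q1 ^ 2) (q2 ^ 2) ltac:(lra) ltac:(lra)) as Hratio.
  set (N1 := coefE (q1 ^ 2)) in *. set (N2 := coefE (q2 ^ 2)) in *.
  set (D1 := coefK (q1 ^ 2)) in *. set (D2 := coefK (q2 ^ 2)) in *.
  destruct (Rle_or_lt N2 0) as [HN2 | HN2]; [nra|].
  assert (HN1 : 0 < N1) by nra.
  (* N2/D2 * E2 < N1/D1 * E2 <= N1/D1 * E1 <= K1 <= K2, multiplied through by D1 D2. *)
  assert (D1 * (N2 * ellE q2) < D1 * (D2 * ellK q2)).
  { apply Rlt_le_trans with (N1 * D2 * ellE q2); [nra|].
    apply Rle_trans with (N1 * D2 * ellE q1).
    { apply Rmult_le_compat_l; [nra | exact HE]. }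
    apply Rle_trans with (D1 * D2 * ellK q1); [nra|].
    replace (D1 * (D2 * ellK q2)) with (D1 * D2 * ellK q2) by ring.
    apply Rmult_le_compat_l; [nra | exact HK]. }
  nra.
Qed.

Lemma f_lem_continuity_pt q : Rabs q < 1 -> continuity_pt f_lem q.
Proof.
  intros Hq.
  assert (Hpoly : forall p : R -> R, (forall x, ex_derive p x) -> continuity_pt p q).
  { intros p Hp. apply continuity_pt_filterlim, (ex_derive_continuous (V := R_NormedModule)), Hp. }
  change (continuity_pt (plus_fct (mult_fct (fun q => 4 * q ^ 4 - 5 * q ^ 2 + 1) ellK)
    (mult_fct (fun q => - 8 * q ^ 4 + 8 * q ^ 2 - 1) ellE)) q).
  apply continuity_pt_plus; apply continuity_pt_mult;
    auto using ellK_continuity_pt, ellE_continuity_pt;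
    apply Hpoly; intros; auto_derive; exact I.
Qed.

Lemma unique_sign_change (F : R -> R) a b c : a < b < c ->
  (forall q, a <= q <= b -> continuity_pt F q) -> 0 < F a -> F b < 0 ->
  (forall q1 q2, a <= q1 -> q1 < q2 -> q2 < c -> F q1 <= 0 -> F q2 < 0) ->
  exists qh,
    (a < qh < b /\ F qh = 0 /\ (forall q, a < q < b -> F q = 0 -> q = qh)) /\
    (forall q, a <= q < qh -> F q > 0) /\
    (forall q, qh < q < c -> F q < 0).
Proof.
  intros Habc Hcont Ha Hb Hsign.
  destruct (IVT_interv (fun q => - F q) a b) as [qh [Hqh HFqh]];
    [intros q Hq; apply continuity_pt_opp, Hcont, Hq | lra | lra | lra |].
  assert (HF : F qh = 0) by lra.
  assert (Hqh' : a < qh < b).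
  { split; apply Rnot_le_lt; intros Hle.
    - assert (qh = a) by lra. subst. lra.
    - assert (qh = b) by lra. subst. lra. }
  exists qh. split; [split; [exact Hqh' | split; [exact HF|]] | split].
  - intros q Hq HFq. destruct (Rtotal_order q qh) as [Hlt | [Heq | Hgt]]; [| exact Heq |].
    + pose proof (Hsign q qh ltac:(lra) Hlt ltac:(lra) ltac:(lra)). lra.
    + pose proof (Hsign qh q ltac:(lra) Hgt ltac:(lra) ltac:(lra)). lra.
  - intros q Hq. destruct (Rle_or_lt (F q) 0) as [Hle | Hgt]; [|exact Hgt].
    pose proof (Hsign q qh ltac:(lra) ltac:(lra) ltac:(lra) Hle). lra.
  - intros q Hq. apply (Hsign qh q); lra.
Qed.

Lemma inv_sqrt2_sqr : (/ sqrt 2) ^ 2 = 1 / 2.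
Proof. rewrite pow_inv, <- Rsqr_pow2, Rsqr_sqrt by lra. field. Qed.

Theorem lemma2p3 (qs : R) :
  0 < qs < 1 -> 2 * ellE qs - ellK qs = 0 ->
  exists qh : R,
    (/ sqrt 2 < qh < qs /\ f_lem qh = 0 /\
     (forall q, / sqrt 2 < q < qs -> f_lem q = 0 -> q = qh)) /\
    (forall q, / sqrt 2 <= q < qh -> f_lem q > 0) /\
    (forall q, qh < q < 1 -> f_lem q < 0).
Proof.
  intros Hqs Hstar.
  pose proof inv_sqrt2_sqr as Ha2.
  assert (Ha : 0 < / sqrt 2) by (apply Rinv_0_lt_compat, Rlt_sqrt2_0).
  assert (Hqs2 : 1 / 2 < qs ^ 2).
  { apply Rnot_le_lt. intros Hle. pose proof (ellK_lt_twice_ellE qs Hle). lra. }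
  apply unique_sign_change.
  - split; [nra | lra].
  - intros q Hq. apply f_lem_continuity_pt. rewrite Rabs_right; lra.
  - rewrite f_lem_coef, Ha2. unfold coefE, coefK.
    pose proof (ellK_lt_twice_ellE (/ sqrt 2) ltac:(lra)). lra.
  - rewrite f_lem_coef. replace (ellK qs) with (2 * ellE qs) by lra.
    pose proof (ellE_pos qs ltac:(nra)). unfold coefE, coefK. nra.
  - intros q1 q2 Hq1 H12 H2. apply f_lem_neg_after_nonpos; nra.
Qed.
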